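(* Consider the $M/G/\infty$ queueing system: customers arrive according to a Poisson process of rate $\lambda>0$, there are infinitely many servers (so every arriving customer immediately starts service), and service times are i.i.d. with continuous distribution function $B(x)$, independent of the arrival process. Let $\overline{B}(x)=1-B(x)$ and assume $b=\int_0^\infty \overline{B}(x)\,dx<\infty$; put $\rho=\lambda b$ and $\rho(t)=\lambda\int_0^t \overline{B}(x)\,dx$. Let $Q(t)$ be the number of customers in the system at time $t$, with $P(Q(0)=0)=1$, let $P_k(t)=P(Q(t)=k)$ and $P_k=\frac{\rho^k}{k!}e^{-\rho}$ for $k\ge 0$, and let $\varphi(t)=\sup_{k\ge 0}|P_k(t)-P_k|$. Then for all $t\ge 0$, $$\varphi(t)\le C_\rho\,(\rho-\rho(t)) = C_\rho\,\lambda\int_t^\infty \overline{B}(x)\,dx,\qquad\text{where } C_\rho=2\,\frac{\rho^{[\rho]}}{[\rho]!},$$ and $[\rho]$ denotes the integer part of $\rho$.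
   Context: It is known (and may be used) that $P_k(t)=\frac{(\rho(t))^k}{k!}e^{-\rho(t)}$ for $k\ge 0$, so $P_k=\lim_{t\to\infty}P_k(t)$ is the stationary distribution of $Q(t)$. *)

From Stdlib Require Import Reals.
From Coquelicot Require Import Coquelicot.
Open Scope R_scope.

Definition poisson_pmf (r : R) (k : nat) : R :=
  r ^ k / INR (Factorial.fact k) * exp (- r).

Definition rho_t (lam : R) (B : R -> R) (t : R) : R :=
  lam * RInt (fun x => 1 - B x) 0 t.

(* P_k(t) = P(Q(t) = k) for the M/G/infinity queue started empty:
   by the known result quoted in the context, Q(t) ~ Poisson(rho(t)). *)
Definition MGinf_Pk (lam : R) (B : R -> R) (t : R) (k : nat) : R :=
  poisson_pmf (rho_t lam B t) k.

(* integer part [x] as a natural number (x >= 0 in use) *)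
Definition int_part_nat (x : R) : nat := Z.to_nat (Int_part x).

Definition C_rho (rho : R) : R :=
  2 * (rho ^ int_part_nat rho / INR (Factorial.fact (int_part_nat rho))).

(* The queue length Q(t) is Poisson with parameter rho(t), and rho(t) increases to rho.
   As a function of its parameter r, the Poisson mass r^k e^(-r) / k! has derivative
   p_(k-1)(r) - p_k(r), a difference of two probabilities, so it is 1-Lipschitz.
   Hence |P_k(t) - P_k| <= rho - rho(t), and C_rho >= 2 because n! <= rho^n for
   n = [rho] <= rho. The tail formula for rho - rho(t) is Chasles' relation for the
   improper integral of 1 - B. *)

From Stdlib Require Import Reals Lra Lia ZArith.
From Coquelicot Require Import Coquelicot.
Open Scope R_scope.

Lemma INR_fact_gt0 n : 0 < INR (Factorial.fact n).
Proof. apply lt_0_INR, Factorial.lt_O_fact. Qed.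

Lemma poisson_pmf_ge0 r k : 0 <= r -> 0 <= poisson_pmf r k.
Proof.
  intros Hr. unfold poisson_pmf.
  apply Rmult_le_pos; [|left; apply exp_pos].
  apply Rmult_le_pos; [apply pow_le; lra|].
  left; apply Rinv_0_lt_compat, INR_fact_gt0.
Qed.

Lemma pow_div_fact_le_exp r k : 0 <= r -> r ^ k / INR (Factorial.fact k) <= exp r.
Proof.
  intros Hr. eapply Rle_trans; [|apply (exp_ge_taylor r k Hr)].
  destruct k as [|k]; [simpl; lra|].
  rewrite tech5.
  assert (0 <= sum_f_R0 (fun i => r ^ i / INR (Factorial.fact i)) k).
  { apply cond_pos_sum. intros i. apply Rmult_le_pos; [apply pow_le; lra|].
    left; apply Rinv_0_lt_compat, INR_fact_gt0. }
  lra.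
Qed.

Lemma poisson_pmf_le1 r k : 0 <= r -> poisson_pmf r k <= 1.
Proof.
  intros Hr. unfold poisson_pmf.
  rewrite <- (Rinv_r (exp r)) by (apply Rgt_not_eq, exp_pos).
  rewrite <- exp_Ropp.
  apply Rmult_le_compat_r; [left; apply exp_pos|].
  apply pow_div_fact_le_exp; exact Hr.
Qed.

Definition poisson_pmf_deriv (k : nat) (r : R) : R :=
  match k with
  | O => - exp (- r)
  | S j => poisson_pmf r j - poisson_pmf r (S j)
  end.

Lemma is_derive_poisson_pmf k r :
  is_derive (fun x => poisson_pmf x k) r (poisson_pmf_deriv k r).
Proof.
  unfold poisson_pmf_deriv, poisson_pmf. destruct k as [|j].
  - auto_derive; auto. field.
  - rewrite fact_simpl, mult_INR.
    assert (Hfact := INR_fact_gt0 j).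
    assert (Hj : 0 < INR (S j)) by (apply lt_0_INR; lia).
    auto_derive; auto.
    change (match j with 0%nat => 1 | S _ => INR j + 1 end) with (INR (S j)).
    simpl pow. field. lra.
Qed.

Lemma Rabs_poisson_pmf_deriv_le1 k r : 0 <= r -> Rabs (poisson_pmf_deriv k r) <= 1.
Proof.
  intros Hr. destruct k as [|j]; simpl.
  - rewrite Rabs_Ropp, Rabs_pos_eq by (left; apply exp_pos).
    rewrite <- exp_0. destruct (Req_dec r 0) as [->|Hr0].
    + rewrite Ropp_0; lra.
    + left; apply exp_increasing; lra.
  - pose proof (poisson_pmf_ge0 r j Hr). pose proof (poisson_pmf_ge0 r (S j) Hr).
    pose proof (poisson_pmf_le1 r j Hr). pose proof (poisson_pmf_le1 r (S j) Hr).
    apply Rabs_le; lra.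
Qed.

Lemma poisson_pmf_lipschitz k x y : 0 <= x -> x <= y ->
  Rabs (poisson_pmf x k - poisson_pmf y k) <= y - x.
Proof.
  intros Hx Hxy.
  destruct (MVT_gen (fun r => poisson_pmf r k) x y (poisson_pmf_deriv k))
    as [c [Hc Hmvt]].
  - intros; apply is_derive_poisson_pmf.
  - intros z _. apply continuity_pt_filterlim.
    apply (ex_derive_continuous (fun r => poisson_pmf r k)).
    eexists; apply is_derive_poisson_pmf.
  - rewrite Rmin_left, Rmax_right in Hc by lra.
    rewrite Rabs_minus_sym, Hmvt, Rabs_mult, (Rabs_pos_eq (y - x)) by lra.
    rewrite <- (Rmult_1_l (y - x)) at 2.
    apply Rmult_le_compat_r; [lra|]. apply Rabs_poisson_pmf_deriv_le1; lra.
Qed.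

Lemma fact_le_pow r n : INR n <= r -> INR (Factorial.fact n) <= r ^ n.
Proof.
  induction n as [|n IH]; intros Hn; [simpl; lra|].
  rewrite fact_simpl, mult_INR, <- tech_pow_Rmult.
  pose proof (pos_INR n). pose proof (S_INR n).
  apply Rmult_le_compat; try lra. apply pos_INR.
Qed.

Lemma INR_int_part_nat_le x : 0 <= x -> INR (int_part_nat x) <= x.
Proof.
  intros Hx. unfold int_part_nat.
  destruct (Z_lt_le_dec (Int_part x) 0) as [Hneg|Hnonneg].
  - replace (Z.to_nat (Int_part x)) with 0%nat by (destruct (Int_part x); simpl; lia).
    simpl; lra.
  - rewrite INR_IZR_INZ, Z2Nat.id by lia. apply base_Int_part.
Qed.

Lemma C_rho_ge2 r : 0 <= r -> 2 <= C_rho r.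
Proof.
  intros Hr. unfold C_rho. set (n := int_part_nat r).
  assert (Hfact := INR_fact_gt0 n).
  assert (Hle := fact_le_pow r n (INR_int_part_nat_le r Hr)).
  assert (1 <= r ^ n / INR (Factorial.fact n)).
  { apply (Rmult_le_reg_r (INR (Factorial.fact n))); [exact Hfact|].
    unfold Rdiv; rewrite Rmult_assoc, Rinv_l by lra. lra. }
  lra.
Qed.

Lemma nondecreasing_le_lim_p_infty (f : R -> R) (l : R) :
  (forall x y, x <= y -> f x <= f y) -> is_lim f p_infty l -> forall x, f x <= l.
Proof.
  intros f_nondecreasing f_lim x.
  assert (Hle : Rbar_locally' p_infty (fun y => f x <= f y)).
  { exists x. intros y Hy. apply f_nondecreasing; lra. }
  exact (is_lim_le_loc _ _ _ _ _ Hle (is_lim_const (f x) p_infty) f_lim).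
Qed.

Lemma is_RInt_gen_tail (f : R -> R) (a t l : R) :
  ex_RInt f a t ->
  is_RInt_gen f (at_point a) (Rbar_locally p_infty) l ->
  is_RInt_gen f (at_point t) (Rbar_locally p_infty) (l - RInt f a t).
Proof.
  intros Hint Hl.
  assert (Hta : is_RInt_gen f (at_point t) (at_point a) (- RInt f a t)).
  { apply is_RInt_gen_at_point, (is_RInt_swap (V := R_NormedModule)).
    apply (RInt_correct (V := R_CompleteNormedModule)), Hint. }
  replace (l - RInt f a t) with (plus (- RInt f a t) l) by (unfold plus; simpl; ring).
  exact (is_RInt_gen_Chasles f a _ _ Hta Hl).
Qed.

Lemma is_RInt_gen_ge0 (f : R -> R) (a l : R) :
  (forall x, a <= x -> 0 <= f x) ->
  is_RInt_gen f (at_point a) (Rbar_locally p_infty) l -> 0 <= l.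
Proof.
  intros Hf Hl.
  eapply Rle_trans; [apply Rabs_pos|].
  apply (RInt_gen_norm (V := R_CompleteNormedModule)
    (Fa := at_point a) (Fb := Rbar_locally p_infty) f f l l); auto.
  - apply Filter_prod with (fun x => x = a) (fun y => a < y);
      [reflexivity | now exists a | intros x y -> Hy; simpl; lra].
  - apply Filter_prod with (fun x => x = a) (fun y => a < y);
      [reflexivity | now exists a |].
    intros x y -> _ z Hz. simpl in Hz.
    unfold norm; simpl. rewrite Rabs_pos_eq; [lra | apply Hf; lra].
Qed.

Theorem mainTheorem1
  (lam : R) (B : R -> R) (b : R)
  (Hlam : 0 < lam)
  (* B is a continuous distribution function of a nonnegative service time *)
  (HBcont : forall x, continuous B x)
  (HBmono : forall x y, x <= y -> B x <= B y)
  (HBneg : forall x, x < 0 -> B x = 0)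
  (HBlim : is_lim B p_infty 1)
  (* b = int_0^oo (1 - B x) dx < oo *)
  (Hb : is_RInt_gen (fun x => 1 - B x) (at_point 0) (Rbar_locally p_infty) b) :
  let rho := lam * b in
  forall t : R, 0 <= t ->
    is_RInt_gen (fun x => 1 - B x) (at_point t) (Rbar_locally p_infty)
      ((rho - rho_t lam B t) / lam) /\
    (forall k : nat,
      Rabs (MGinf_Pk lam B t k - poisson_pmf rho k)
        <= C_rho rho * (rho - rho_t lam B t)).
Proof.
  intros rho t Ht.
  set (f := fun x => 1 - B x).
  assert (Hf0 : forall x, 0 <= f x).
  { intros x; pose proof (nondecreasing_le_lim_p_infty B 1 HBmono HBlim x); unfold f; lra. }
  assert (Hint : ex_RInt f 0 t).
  { apply (ex_RInt_continuous (V := R_CompleteNormedModule)). intros z _.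
    apply (continuous_minus (fun _ => 1) B); [apply continuous_const | apply HBcont]. }
  set (I := RInt f 0 t).
  assert (Htail := is_RInt_gen_tail f 0 t b Hint Hb).
  assert (HI : 0 <= I) by (apply RInt_ge_0; auto).
  assert (Htail0 : 0 <= b - I) by (apply (is_RInt_gen_ge0 f t); auto).
  assert (Hrt : rho_t lam B t = lam * I) by reflexivity.
  assert (Hgap : rho - rho_t lam B t = lam * (b - I)) by (rewrite Hrt; unfold rho; ring).
  split.
  - replace ((rho - rho_t lam B t) / lam) with (b - I) by (rewrite Hgap; field; lra).
    exact Htail.
  - intros k. unfold MGinf_Pk.
    assert (Hrt0 : 0 <= rho_t lam B t) by (rewrite Hrt; apply Rmult_le_pos; lra).
    assert (Hgap0 : 0 <= rho - rho_t lam B t) by (rewrite Hgap; apply Rmult_le_pos; lra).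
    assert (HC := C_rho_ge2 rho ltac:(lra)).
    apply Rle_trans with (rho - rho_t lam B t); [apply poisson_pmf_lipschitz; lra | nra].
Qed.
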